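(* Let $H$ be a separable complex Hilbert space, $(\Omega,\mu)$ a measure space with positive measure, and let $K\in B(H)$ have closed range. Let $F:\Omega\to H$ be a Parseval continuous $K$-frame of $H$ with analysis operator $T$, and let $G:\Omega\to H$ be weakly measurable. Then $G$ is a dual continuous $K$-Bessel sequence of $F$ if and only if there exists $\varphi\in B(H,L^2(\Omega,\mu))$ such that $T^{\ast}\varphi=0$ and $(\varphi f)(\omega)=\langle f,G(\omega)-K^{\dagger}F(\omega)\rangle$ for all $f\in H$ and all $\omega\in\Omega$.
   Context: A map $F:\Omega\to H$ is weakly measurable if $\omega\mapsto\langle f,F(\omega)\rangle$ is measurable for every $f\in H$. A continuous Bessel sequence is a weakly measurable $G$ with $\int_\Omega|\langle f,G(\omega)\rangle|^2\,d\mu(\omega)\le B\|f\|^2$ for all $f\in H$, for some $B>0$. A Parseval continuous $K$-frame is a weakly measurable $F$ with $\int_\Omega|\langle f,F(\omega)\rangle|^2\,d\mu(\omega)=\|K^{\ast}f\|^2$ for all $f\in H$. The analysis operator of $F$ is $T:H\to L^2(\Omega,\mu)$, $Tf=\{\langle f,F(\omega)\rangle\}_{\omega}$, and $T^{\ast}c=\int_\Omega c(\omega)F(\omega)\,d\mu(\omega)$. A dual continuous $K$-Bessel sequence of $F$ is a continuous Bessel sequence $G$ such that $Kf=\int_\Omega\langle f,G(\omega)\rangle F(\omega)\,d\mu(\omega)$ for all $f\in H$. $K^{\dagger}$ denotes the Moore–Penrose pseudo-inverse of the closed-range operator $K$. *)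

From HB Require Import structures.
From mathcomp Require Import all_boot all_order all_algebra.
From mathcomp Require Import all_classical all_reals all_analysis.
From mathcomp Require Import complex.
Set Implicit Arguments. Unset Strict Implicit. Unset Printing Implicit Defensive.
Import Order.TTheory GRing.Theory Num.Theory.
Import numFieldNormedType.Exports.
Local Open Scope classical_set_scope.
Local Open Scope ring_scope.

Section HilbertDefs.
Variables (R : realType) (V : lmodType R[i]) (inner : V -> V -> R[i]).

Local Notation Re := (@complex.Re R).
Local Notation Im := (@complex.Im R).

Definition cabs2 (z : R[i]) : R := Re z ^+ 2 + Im z ^+ 2.

Definition hnorm (x : V) : R := Num.sqrt (Re (inner x x)).

Definition inner_product : Prop :=
  [/\ forall (a : R[i]) (x y z : V), inner (a *: x + y) z = a * inner x z + inner y z,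
      forall x y : V, inner y x = conjc (inner x y),
      forall x : V, 0 <= Re (inner x x) &
      forall x : V, inner x x = 0 -> x = 0].

Definition hcomplete : Prop :=
  forall u : nat -> V,
    (forall e : R, 0 < e -> exists N : nat, forall m n : nat,
        (N <= m)%N -> (N <= n)%N -> hnorm (u m - u n) < e) ->
    exists l : V, forall e : R, 0 < e -> exists N : nat, forall n : nat,
        (N <= n)%N -> hnorm (u n - l) < e.

Definition hseparable : Prop :=
  exists D : nat -> V, forall (x : V) (e : R), 0 < e -> exists n : nat, hnorm (x - D n) < e.

Definition separable_hilbert_space : Prop :=
  [/\ inner_product, hcomplete & hseparable].

Definition bounded_linear (A : V -> V) : Prop :=
  (forall (a : R[i]) (x y : V), A (a *: x + y) = a *: A x + A y) /\
  (exists c : R, forall x : V, hnorm (A x) <= c * hnorm x).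

Definition is_adjoint (A B : V -> V) : Prop :=
  forall x y : V, inner (A x) y = inner x (B y).

Definition closed_range (A : V -> V) : Prop :=
  forall y : V, (forall e : R, 0 < e -> exists x : V, hnorm (A x - y) < e) ->
    exists x : V, A x = y.

Definition is_MP_inverse (A Ad : V -> V) : Prop :=
  [/\ bounded_linear Ad,
      forall x, A (Ad (A x)) = A x,
      forall x, Ad (A (Ad x)) = Ad x,
      is_adjoint (fun x => A (Ad x)) (fun x => A (Ad x)) &
      is_adjoint (fun x => Ad (A x)) (fun x => Ad (A x))].

Variables (d : measure_display) (T : measurableType d)
          (mu : {measure set T -> \bar R}).

Definition cmeasurable (g : T -> R[i]) : Prop :=
  measurable_fun setT (fun w => Re (g w)) /\ measurable_fun setT (fun w => Im (g w)).

Definition cintegrable (g : T -> R[i]) : Prop :=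
  mu.-integrable setT (fun w => (Re (g w))%:E) /\
  mu.-integrable setT (fun w => (Im (g w))%:E).

Definition cintegral (g : T -> R[i]) : R[i] :=
  Complex (Rintegral mu setT (fun w => Re (g w))) (Rintegral mu setT (fun w => Im (g w))).

Definition sqint (g : T -> R[i]) : \bar R := (\int[mu]_w (cabs2 (g w))%:E)%E.

Definition weakly_measurable (F : T -> V) : Prop :=
  forall f : V, cmeasurable (fun w => inner f (F w)).

Definition cont_bessel (G : T -> V) : Prop :=
  weakly_measurable G /\
  exists B : R, 0 < B /\ forall f : V, (sqint (fun w => inner f (G w)) <= (B * hnorm f ^+ 2)%:E)%E.

Definition parseval_cont_Kframe (Kadj : V -> V) (F : T -> V) : Prop :=
  weakly_measurable F /\
  forall f : V, sqint (fun w => inner f (F w)) = (hnorm (Kadj f) ^+ 2)%:E.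

(* v = \int_Omega c(w) F(w) dmu(w) in the weak sense:
   <v, h> = \int c(w) <F(w), h> dmu(w) for all h  (i.e. v = T^* c) *)
Definition weak_integral_is (c : T -> R[i]) (F : T -> V) (v : V) : Prop :=
  forall h : V, cintegrable (fun w => c w * inner (F w) h) /\
                inner v h = cintegral (fun w => c w * inner (F w) h).

Definition dual_cont_K_bessel (K : V -> V) (F G : T -> V) : Prop :=
  cont_bessel G /\
  forall f : V, weak_integral_is (fun w => inner f (G w)) F (K f).

(* phi is (a representative of) a bounded operator H -> L^2(Omega, mu) *)
Definition bounded_to_L2 (phi : V -> T -> R[i]) : Prop :=
  [/\ forall f : V, cmeasurable (phi f) /\ (sqint (phi f) < +oo)%E,
      forall (a : R[i]) (f g : V) (w : T), phi (a *: f + g) w = a * phi f w + phi g w &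
      exists c : R, forall f : V, (sqint (phi f) <= (c * hnorm f ^+ 2)%:E)%E].

End HilbertDefs.

From HB Require Import structures.
From mathcomp Require Import all_boot all_order all_algebra.
From mathcomp Require Import all_classical all_reals all_analysis.
From mathcomp Require Import complex measurable_realfun.
From mathcomp Require Import ring lra.
Import Order.TTheory GRing.Theory Num.Theory.
Local Open Scope classical_set_scope.
Local Open Scope ring_scope.
Set Implicit Arguments. Unset Strict Implicit. Unset Printing Implicit Defensive.

(* The adjoint [D] of the bounded operator [K^+] exists by the Riesz representation theorem
   (a functional is represented by a multiple of the point of minimal norm on the hyperplane
   where it equals 1), and uniqueness of adjoints together with the Penrose equations gives
   [K^* D = (K^+ K)^* = K^+ K].  Polarizing the Parseval identity of [F] yields
   [\int <g, F w> <F w, h> = <K^* g, K^* h>]; for [g = D f] this shows that [w |-> K^+ (F w)]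
   is a continuous Bessel sequence and a dual of [F], since [<K^* D f, K^* h> = <K K^+ K f, h>
   = <K f, h>].  So [G] is a dual iff [phi f w = <f, G w> - <f, K^+ (F w)>] is a bounded map
   into [L^2] with [T^* phi = 0]: boundedness and reconstruction both pass through sums and
   differences. *)

Section ComplexParts.
Variable R : realType.
Implicit Types x y : R[i].
Local Notation Re := (@complex.Re R).
Local Notation Im := (@complex.Im R).

Lemma complex_ext x y : Re x = Re y -> Im x = Im y -> x = y.
Proof. by case: x => a b; case: y => c e /= -> ->. Qed.

Lemma cReD x y : Re (x + y) = Re x + Re y. Proof. by case: x; case: y. Qed.
Lemma cImD x y : Im (x + y) = Im x + Im y. Proof. by case: x; case: y. Qed.
Lemma cReN x : Re (- x) = - Re x. Proof. by case: x. Qed.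
Lemma cImN x : Im (- x) = - Im x. Proof. by case: x. Qed.
Lemma cReB x y : Re (x - y) = Re x - Re y. Proof. by rewrite cReD cReN. Qed.
Lemma cImB x y : Im (x - y) = Im x - Im y. Proof. by rewrite cImD cImN. Qed.
Lemma cReM x y : Re (x * y) = Re x * Re y - Im x * Im y. Proof. by case: x; case: y. Qed.
Lemma cImM x y : Im (x * y) = Re x * Im y + Im x * Re y. Proof. by case: x; case: y. Qed.
Lemma cReJ x : Re x^*%C = Re x. Proof. by case: x. Qed.
Lemma cImJ x : Im x^*%C = - Im x. Proof. by case: x. Qed.

Definition cpartE := (cReD, cImD, cReB, cImB, cReN, cImN, cReM, cImM, cReJ, cImJ).

Lemma cabs2_ge0 x : 0 <= cabs2 x.
Proof. by rewrite addr_ge0 ?sqr_ge0. Qed.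

Lemma cabs2_eq0 x : cabs2 x = 0 -> x = 0.
Proof.
rewrite /cabs2 => /eqP; rewrite paddr_eq0 ?sqr_ge0 // !sqrf_eq0 => /andP[/eqP Re0 /eqP Im0].
exact: complex_ext.
Qed.

Lemma sqr_Re_le_cabs2 x : Re x ^+ 2 <= cabs2 x.
Proof. by rewrite lerDl sqr_ge0. Qed.

Lemma cabs2M x y : cabs2 (x * y) = cabs2 x * cabs2 y.
Proof. by rewrite /cabs2 !cpartE; ring. Qed.

Lemma cabs2D_le x y : cabs2 (x + y) <= 2 * cabs2 x + 2 * cabs2 y.
Proof.
rewrite /cabs2 !cpartE; have := sqr_ge0 (Re x - Re y); have := sqr_ge0 (Im x - Im y).
nra.
Qed.

Lemma cabs2N x : cabs2 (- x) = cabs2 x.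
Proof. by rewrite /cabs2 !cpartE !sqrrN. Qed.

Lemma cabs2B_le x y : cabs2 (x - y) <= 2 * cabs2 x + 2 * cabs2 y.
Proof. by rewrite -[cabs2 y]cabs2N cabs2D_le. Qed.

Lemma cpolarization x y : x * y^*%C =
  Complex ((cabs2 (x + y) - cabs2 (x - y)) / 4)
          ((cabs2 (x + 'i%C * y) - cabs2 (x - 'i%C * y)) / 4).
Proof. by apply: complex_ext; rewrite /= /cabs2 !cpartE /=; field. Qed.

End ComplexParts.

Section LinearMap.
Variables (R : realType) (U W : lmodType R[i]).

Definition clinear (A : U -> W) := forall a x y, A (a *: x + y) = a *: A x + A y.

Variables (A : U -> W) (A_lin : clinear A).

Lemma clinear0 : A 0 = 0.
Proof.
have := A_lin 1 0 0; rewrite scaler0 addr0 scale1r => A00.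
by apply: (@addrI _ (A 0)); rewrite addr0 -A00.
Qed.

Lemma clinearZ a x : A (a *: x) = a *: A x.
Proof. by rewrite -[a *: x]addr0 A_lin clinear0 addr0. Qed.

Lemma clinearD x y : A (x + y) = A x + A y.
Proof. by rewrite -[x]scale1r A_lin !scale1r. Qed.

Lemma clinearB x y : A (x - y) = A x - A y.
Proof. by rewrite clinearD -scaleN1r clinearZ scaleN1r. Qed.

End LinearMap.

Section InnerProduct.
Variables (R : realType) (V : lmodType R[i]) (inner : V -> V -> R[i]).
Hypothesis ip : inner_product inner.
Local Notation Re := (@complex.Re R).
Local Notation Im := (@complex.Im R).

Definition hnorm2 x := Re (inner x x).

Lemma inner_clinearl z : clinear (fun x => inner x z : R[i]^o).
Proof. by case: ip => lin _ _ _ a x y; exact: lin. Qed.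

Lemma inner_conj x y : inner y x = (inner x y)^*%C.
Proof. by case: ip. Qed.

Lemma inner0l z : inner 0 z = 0.
Proof. exact: (clinear0 (inner_clinearl z)). Qed.
Lemma innerZl a x z : inner (a *: x) z = a * inner x z.
Proof. exact: (clinearZ (inner_clinearl z)). Qed.
Lemma innerDl x y z : inner (x + y) z = inner x z + inner y z.
Proof. exact: (clinearD (inner_clinearl z)). Qed.
Lemma innerBl x y z : inner (x - y) z = inner x z - inner y z.
Proof. exact: (clinearB (inner_clinearl z)). Qed.

Lemma inner0r z : inner z 0 = 0.
Proof. by rewrite inner_conj inner0l conjc0. Qed.
Lemma innerZr a x z : inner z (a *: x) = a^*%C * inner z x.
Proof. by rewrite inner_conj innerZl rmorphM /= -inner_conj. Qed.
Lemma innerDr x y z : inner z (x + y) = inner z x + inner z y.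
Proof. by rewrite inner_conj innerDl rmorphD /= -!inner_conj. Qed.
Lemma innerBr x y z : inner z (x - y) = inner z x - inner z y.
Proof. by rewrite inner_conj innerBl rmorphB /= -!inner_conj. Qed.

Lemma inner_self_real x : inner x x = (hnorm2 x)%:C%C.
Proof.
apply: complex_ext => //=; have := congr1 (@complex.Im R) (inner_conj x x).
by rewrite cImJ; lra.
Qed.

Lemma hnorm2_ge0 x : 0 <= hnorm2 x.
Proof. by case: ip => _ _ + _; apply. Qed.

Lemma hnorm2_eq0 x : hnorm2 x = 0 -> x = 0.
Proof. by case: ip => _ _ _ + hx; apply; rewrite inner_self_real hx. Qed.

Lemma hnorm20 : hnorm2 0 = 0.
Proof. by rewrite /hnorm2 inner0l. Qed.

Lemma hnorm2D x y : hnorm2 (x + y) = hnorm2 x + hnorm2 y + 2 * Re (inner x y).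
Proof. by rewrite /hnorm2 innerDl !innerDr (inner_conj x y) !cpartE; lra. Qed.

Lemma hnorm2B x y : hnorm2 (x - y) = hnorm2 x + hnorm2 y - 2 * Re (inner x y).
Proof. by rewrite /hnorm2 innerBl !innerBr (inner_conj x y) !cpartE; lra. Qed.

Lemma hnorm2Z a x : hnorm2 (a *: x) = cabs2 a * hnorm2 x.
Proof. by rewrite /hnorm2 innerZl innerZr inner_self_real /cabs2 !cpartE /=; ring. Qed.

Lemma hnorm2_sub_proj x y : hnorm2 y != 0 ->
  hnorm2 (x - ((hnorm2 y)^-1%:C%C * inner x y) *: y) =
  hnorm2 x - cabs2 (inner x y) / hnorm2 y.
Proof.
move=> y0; rewrite hnorm2B hnorm2Z innerZr rmorphM /= /cabs2 !cpartE /=.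
by field.
Qed.

Lemma cauchy_schwarz x y : cabs2 (inner x y) <= hnorm2 x * hnorm2 y.
Proof.
have [/hnorm2_eq0 ->|y0] := eqVneq (hnorm2 y) 0.
  by rewrite inner0r hnorm20 mulr0 /cabs2 /= expr0n /= addr0.
have y_gt0 : 0 < hnorm2 y by rewrite lt_neqAle eq_sym y0 hnorm2_ge0.
have := hnorm2_ge0 (x - ((hnorm2 y)^-1%:C%C * inner x y) *: y).
by rewrite hnorm2_sub_proj // subr_ge0 ler_pdivrMr.
Qed.

Lemma inner_inj x y : (forall z, inner z x = inner z y) -> x = y.
Proof.
move=> xy; apply/eqP; rewrite -subr_eq0; apply/eqP/hnorm2_eq0.
by rewrite /hnorm2 innerBr xy subrr.
Qed.

Lemma inner_polarization x y : inner x y =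
  Complex ((hnorm2 (x + y) - hnorm2 (x - y)) / 4)
          ((hnorm2 (x + 'i%C *: y) - hnorm2 (x - 'i%C *: y)) / 4).
Proof.
rewrite !hnorm2B !hnorm2D !innerZr !hnorm2Z.
by apply: complex_ext; rewrite /= /cabs2 ?cpartE /=; lra.
Qed.

Lemma hnorm_sqr x : hnorm inner x ^+ 2 = hnorm2 x.
Proof. by rewrite sqr_sqrtr // hnorm2_ge0. Qed.

Lemma hnorm_ge0 x : 0 <= hnorm inner x.
Proof. exact: sqrtr_ge0. Qed.

Lemma hnorm_lt x e : 0 < e -> (hnorm inner x < e) = (hnorm2 x < e ^+ 2).
Proof.
move=> e0; rewrite /hnorm -(ltr_sqrt _ (exprn_gt0 2 e0)) sqrtr_sqr ger0_norm ?ltW //.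
Qed.

Lemma Re_inner_le x y : `|Re (inner x y)| <= hnorm inner x * hnorm inner y.
Proof.
rewrite -ler_sqr ?nnegrE ?mulr_ge0 ?hnorm_ge0 //.
rewrite real_normK ?num_real // exprMn !hnorm_sqr.
exact: le_trans (sqr_Re_le_cabs2 _) (cauchy_schwarz x y).
Qed.

Lemma bounded_linear_hnorm2 A : bounded_linear inner A ->
  exists c, 0 <= c /\ forall x, hnorm2 (A x) <= c * hnorm2 x.
Proof.
move=> [_ [c Ac]]; exists (c ^+ 2); split=> [|x]; first exact: sqr_ge0.
rewrite -!hnorm_sqr -exprMn ler_sqr ?nnegrE ?hnorm_ge0 //.
exact: le_trans (hnorm_ge0 _) (Ac x).
Qed.

Lemma hnorm2_le_approx x d : 0 <= d ->
  (forall e, 0 < e -> exists y, hnorm2 y <= d + e /\ hnorm inner (y - x) < e) ->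
  hnorm2 x <= d.
Proof.
move=> d0 approx; apply/ler_addgt0Pr => e e0.
pose r := Num.min 1 (e / (4 + d)).
have r0 : 0 < r by rewrite lt_min ltr01 divr_gt0 //; lra.
have r1 : r <= 1 by rewrite ge_min lexx.
have d4 : 0 < 4 + d by lra.
have re : r * (4 + d) <= e by rewrite -ler_pdivlMr // /r ge_min lexx orbT.
have [y [yd yx]] := approx r r0.
have expand : hnorm2 x <=
    hnorm2 y + hnorm inner (y - x) ^+ 2 + 2 * (hnorm inner y * hnorm inner (y - x)).
  rewrite -{1}[x](subKr y) hnorm2B -[hnorm2 (y - x)]hnorm_sqr.
  have := ler_norm (- Re (inner y (y - x))).
  by rewrite normrN; have := Re_inner_le y (y - x); lra.
have := hnorm_sqr y; have := hnorm_ge0 y; have := hnorm_ge0 (y - x).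
move: expand yx; set s := hnorm inner y; set t := hnorm inner (y - x) => expand yx t0 s0 ss.
have st : 2 * (s * t) <= (1 + s ^+ 2) * t by have := sqr_ge0 (s - 1); nra.
have tt : t ^+ 2 <= r by nra.
rewrite ss in st; nra.
Qed.

End InnerProduct.

Lemma inv_succ_lt_eventually (R : realType) (e : R) : 0 < e ->
  exists N, forall n, (N <= n)%N -> n.+1%:R^-1 < e.
Proof.
move=> e0; exists (Num.bound e^-1) => n Nn.
rewrite -[e]invrK ltf_pV2 ?posrE ?invr_gt0 //.
apply: lt_le_trans (archi_boundP _) _; first by rewrite invr_ge0 ltW.
by rewrite ler_nat; apply: leq_trans Nn _.
Qed.


Section Riesz.
Variables (R : realType) (V : lmodType R[i]) (inner : V -> V -> R[i]).
Hypotheses (ip : inner_product inner) (hc : hcomplete inner).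
Variables (phi : V -> R[i]^o) (C : R).
Hypotheses (phi_lin : clinear phi) (C_gt0 : 0 < C)
  (phi_bounded : forall x, cabs2 (phi x) <= C * hnorm2 inner x).
Local Notation hnorm2 := (hnorm2 inner).
Local Notation hnorm := (hnorm inner).

Let level := [set x | phi x = 1].
Let dist2 := inf (hnorm2 @` level).

Let level_lbound : has_lbound (hnorm2 @` level).
Proof. by exists 0 => _ [y _ <-]; exact: hnorm2_ge0. Qed.

Let dist2_le x : phi x = 1 -> dist2 <= hnorm2 x.
Proof. by move=> x1; apply: (ge_inf level_lbound); exists x. Qed.

Let dist2_ge0 x : phi x = 1 -> 0 <= dist2.
Proof.
move=> x1; apply: lb_le_inf; first by exists (hnorm2 x), x.
by move=> _ [y _ <-]; exact: hnorm2_ge0.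
Qed.

Lemma level_parallelogram x y a b : phi x = 1 -> phi y = 1 ->
  hnorm2 x <= dist2 + a -> hnorm2 y <= dist2 + b -> hnorm2 (x - y) <= 2 * a + 2 * b.
Proof.
move=> x1 y1 xa yb.
have mid : phi ((2^-1 : R)%:C%C *: (x + y)) = 1.
  rewrite (clinearZ phi_lin) (clinearD phi_lin) x1 y1.
  by apply: complex_ext; rewrite /= ?cpartE /=; lra.
have := dist2_le mid; rewrite (hnorm2Z ip).
have -> : cabs2 (2^-1 : R)%:C%C = 4^-1 by rewrite /cabs2 /=; field.
by rewrite (hnorm2D ip) (hnorm2B ip); lra.
Qed.

Lemma level_closed x0 :
  (forall e, 0 < e -> exists2 y, phi y = 1 & hnorm2 (y - x0) < e) -> phi x0 = 1.
Proof.
move=> approx; suff /cabs2_eq0/eqP : cabs2 (1 - phi x0) = 0 by rewrite subr_eq0 => /eqP.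
apply/eqP; rewrite eq_le cabs2_ge0 andbT; apply/ler_addgt0Pr => e e0.
have [y y1 yx0] := approx (e / C) (divr_gt0 e0 C_gt0).
rewrite add0r -y1 -(clinearB phi_lin); apply: le_trans (phi_bounded _) _.
by rewrite -ler_pdivlMl // mulrC ltW.
Qed.

Lemma level_minimizer : (exists x, phi x = 1) -> exists2 x0, phi x0 = 1 & hnorm2 x0 <= dist2.
Proof.
move=> [x1 x1_1].
have inf_level : has_inf (hnorm2 @` level) by split; [exists (hnorm2 x1), x1|].
have /choice[xs xsP] : forall n : nat, exists x, phi x = 1 /\ hnorm2 x < dist2 + n.+1%:R^-1.
  move=> n; have n_gt0 : 0 < n.+1%:R^-1 :> R by rewrite invr_gt0.
  by have [_ [x x_1 <-] ?] := inf_adherent n_gt0 inf_level; exists x.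
have cauchy m n : hnorm2 (xs m - xs n) <= 2 * m.+1%:R^-1 + 2 * n.+1%:R^-1.
  have [xm1 /ltW xm] := xsP m; have [xn1 /ltW xn] := xsP n.
  exact: level_parallelogram.
have [x0 xs_cvg] : exists x0, forall e, 0 < e ->
    exists N, forall n, (N <= n)%N -> hnorm (xs n - x0) < e.
  apply: hc => e e0; have e4 : 0 < e ^+ 2 / 4 by rewrite divr_gt0 ?exprn_gt0.
  have [N N_small] := inv_succ_lt_eventually e4.
  exists N => m n Nm Nn; rewrite hnorm_lt //; apply: le_lt_trans (cauchy m n) _.
  move: (N_small m Nm) (N_small n Nn).
  by move: (m.+1%:R^-1 : R) (n.+1%:R^-1 : R) => a b; lra.
exists x0.
  apply: level_closed => e e0; have sqrt_e : 0 < Num.sqrt e by rewrite sqrtr_gt0.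
  have [N xsN] := xs_cvg _ sqrt_e.
  exists (xs N); first exact: (xsP N).1.
  by rewrite -(sqr_sqrtr (ltW e0)) -hnorm_lt // xsN.
apply: (hnorm2_le_approx ip); first exact: dist2_ge0 x1_1.
move=> e e0; have [N1 xsN1] := xs_cvg e e0.
have [N2 N2_small] := inv_succ_lt_eventually e0.
exists (xs (maxn N1 N2)); split; last exact/xsN1/leq_maxl.
move: (xsP (maxn N1 N2)).2 (N2_small _ (leq_maxr N1 N2)).
by move: ((maxn N1 N2).+1%:R^-1 : R) => a; lra.
Qed.

Lemma minimizer_orthogonal x0 : phi x0 = 1 -> hnorm2 x0 <= dist2 ->
  forall z, phi z = 0 -> inner x0 z = 0.
Proof.
move=> x0_1 x0_min z z0.
have [/(hnorm2_eq0 ip) ->|nz] := eqVneq (hnorm2 z) 0; first exact: (inner0r ip).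
have z_gt0 : 0 < hnorm2 z by rewrite lt_neqAle eq_sym nz (hnorm2_ge0 ip).
have y1 : phi (x0 - ((hnorm2 z)^-1%:C%C * inner x0 z) *: z) = 1.
  by rewrite (clinearB phi_lin) (clinearZ phi_lin) z0 scaler0 subr0.
have := dist2_le y1; rewrite (hnorm2_sub_proj ip) // => y_min.
have : cabs2 (inner x0 z) / hnorm2 z <= 0 by lra.
rewrite ler_pdivrMr // mul0r => c0.
by apply/cabs2_eq0/eqP; rewrite eq_le cabs2_ge0 andbT.
Qed.

Lemma riesz_of_orthogonal x0 : phi x0 = 1 ->
  (forall z, phi z = 0 -> inner x0 z = 0) -> exists g, forall x, phi x = inner x g.
Proof.
move=> x0_1 x0_orth.
have x0_neq0 : hnorm2 x0 != 0.
  apply/eqP => /(hnorm2_eq0 ip) x00; move: x0_1; rewrite x00 (clinear0 phi_lin) => /eqP.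
  by rewrite eq_sym oner_eq0.
exists ((hnorm2 x0)^-1%:C%C *: x0) => x.
have phi_z : phi (x - phi x *: x0) = 0.
  by rewrite (clinearB phi_lin) (clinearZ phi_lin) x0_1 -[_ *: 1]/(phi x * 1) mulr1 subrr.
have : inner (x - phi x *: x0) x0 = 0 by rewrite (inner_conj ip) x0_orth // conjc0.
rewrite (innerBl ip) (innerZl ip) (inner_self_real ip) => /eqP; rewrite subr_eq0 => /eqP xx0.
by rewrite (innerZr ip) xx0; apply: complex_ext; rewrite !cpartE /=; field.
Qed.

Theorem riesz_representation : exists g, forall x, phi x = inner x g.
Proof.
have [[x1 x1_neq0]|phi_eq0] := pselect (exists x, phi x != 0); last first.
  exists 0 => x; rewrite (inner0r ip); apply/eqP/negPn/negP => ?.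
  by apply: phi_eq0; exists x.
have x1_1 : phi ((phi x1)^-1 *: x1) = 1.
  by rewrite (clinearZ phi_lin) -[_ *: _]/((phi x1)^-1 * phi x1) mulVf.
have [x0 x0_1 x0_min] := level_minimizer (ex_intro _ _ x1_1).
exact: riesz_of_orthogonal x0_1 (minimizer_orthogonal x0_1 x0_min).
Qed.

End Riesz.

Section SquareIntegrable.
Variables (R : realType) (d : measure_display) (T : measurableType d)
  (mu : {measure set T -> \bar R}).
Local Notation Re := (@complex.Re R).
Local Notation Im := (@complex.Im R).
Local Notation cmeasurable := (@cmeasurable R d T).
Local Notation sqint := (sqint mu).
Implicit Types a b : T -> R[i].

Lemma cmeasurableD a b : cmeasurable a -> cmeasurable b -> cmeasurable (fun w => a w + b w).
Proof.
move=> [aRe aIm] [bRe bIm]; split.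
  by under eq_fun do rewrite cReD; exact: measurable_funD.
by under eq_fun do rewrite cImD; exact: measurable_funD.
Qed.

Lemma cmeasurableN a : cmeasurable a -> cmeasurable (fun w => - a w).
Proof.
move=> [aRe aIm]; split.
  by under eq_fun do rewrite cReN; exact: measurableT_comp.
by under eq_fun do rewrite cImN; exact: measurableT_comp.
Qed.

Lemma cmeasurableB a b : cmeasurable a -> cmeasurable b -> cmeasurable (fun w => a w - b w).
Proof. by move=> ma mb; apply: cmeasurableD => //; exact: cmeasurableN. Qed.

Lemma cmeasurableMl c a : cmeasurable a -> cmeasurable (fun w => c * a w).
Proof.
move=> [aRe aIm]; split; [under eq_fun do rewrite cReM | under eq_fun do rewrite cImM].
  by apply: measurable_funB; apply: measurable_funM => //; exact: measurable_cst.
by apply: measurable_funD; apply: measurable_funM => //; exact: measurable_cst.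
Qed.

Lemma measurable_cabs2 a : cmeasurable a -> measurable_fun setT (fun w => cabs2 (a w)).
Proof. by move=> [aRe aIm]; apply: measurable_funD; apply: measurable_funX. Qed.

Lemma sqint_ge0 a : (0 <= sqint a)%E.
Proof. by apply: integral_ge0 => w _; rewrite lee_fin cabs2_ge0. Qed.

Lemma sqint_le_sum2 a b c : cmeasurable a -> cmeasurable b -> cmeasurable c ->
  (forall w, cabs2 (c w) <= 2 * cabs2 (a w) + 2 * cabs2 (b w)) ->
  (sqint c <= 2%:E * sqint a + 2%:E * sqint b)%E.
Proof.
move=> ma mb mc cab.
have cabs2_ge0E (f : T -> R[i]) w : (0 <= (cabs2 (f w))%:E)%E by rewrite lee_fin cabs2_ge0.
have measurable_cabs2E (f : T -> R[i]) :
    cmeasurable f -> measurable_fun setT (EFin \o (fun w => cabs2 (f w))).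
  by move=> mf; apply/measurable_EFinP; exact: measurable_cabs2.
have measurable_two_cabs2 (f : T -> R[i]) :
    cmeasurable f -> measurable_fun setT (fun w => 2 * cabs2 (f w)).
  by move=> mf; apply: measurable_funM; [exact: measurable_cst|exact: measurable_cabs2].
rewrite /sqint -ge0_integralZl //; last exact: measurable_cabs2E.
rewrite -ge0_integralZl //; last exact: measurable_cabs2E.
rewrite -ge0_integralD //; last 4 first.
- by move=> w _; rewrite -EFinM lee_fin mulr_ge0 // cabs2_ge0.
- exact/measurable_EFinP/measurable_two_cabs2.
- by move=> w _; rewrite -EFinM lee_fin mulr_ge0 // cabs2_ge0.
- exact/measurable_EFinP/measurable_two_cabs2.
apply: ge0_le_integral => //; first exact: measurable_cabs2E.
  under eq_fun do rewrite -!EFinM -EFinD.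
  by apply/measurable_EFinP/measurable_funD; exact: measurable_two_cabs2.
by move=> w _; rewrite -!EFinM -EFinD lee_fin.
Qed.

Definition sqintegrable a := cmeasurable a /\ (sqint a < +oo)%E.

Lemma sqintegrableD a b : sqintegrable a -> sqintegrable b -> sqintegrable (fun w => a w + b w).
Proof.
move=> [ma fa] [mb fb]; split; first exact: cmeasurableD.
apply: le_lt_trans (sqint_le_sum2 ma mb (cmeasurableD ma mb) (fun w => cabs2D_le _ _)) _.
by apply: lte_add_pinfty; apply: lte_mul_pinfty.
Qed.

Lemma sqintegrableB a b : sqintegrable a -> sqintegrable b -> sqintegrable (fun w => a w - b w).
Proof.
move=> [ma fa] [mb fb]; split; first exact: cmeasurableB.
apply: le_lt_trans (sqint_le_sum2 ma mb (cmeasurableB ma mb) (fun w => cabs2B_le _ _)) _.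
by apply: lte_add_pinfty; apply: lte_mul_pinfty.
Qed.

Lemma sqintegrableMl c a : sqintegrable a -> sqintegrable (fun w => c * a w).
Proof.
move=> [ma fa]; split; first exact: cmeasurableMl.
rewrite /sqint; under eq_integral do rewrite cabs2M EFinM.
rewrite ge0_integralZl //; first by apply: lte_mul_pinfty => //; rewrite lee_fin cabs2_ge0.
- exact/measurable_EFinP/measurable_cabs2.
- by move=> w _; rewrite lee_fin cabs2_ge0.
- by rewrite lee_fin cabs2_ge0.
Qed.

Lemma sqintegrable_cabs2 a : sqintegrable a -> mu.-integrable setT (EFin \o (fun w => cabs2 (a w))).
Proof.
move=> [ma fa]; apply/integrableP; split; first exact/measurable_EFinP/measurable_cabs2.
rewrite (eq_integral (fun w => (cabs2 (a w))%:E)) // => w _.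
by rewrite /comp abse_EFin ger0_norm // cabs2_ge0.
Qed.

Lemma Rintegral_cabs2 a : sqintegrable a ->
  (Rintegral mu setT (fun w => cabs2 (a w)))%:E = sqint a.
Proof. by move=> [ma fa]; rewrite /Rintegral fineK // ge0_fin_numE // sqint_ge0. Qed.

End SquareIntegrable.

Section ComplexIntegral.
Variables (R : realType) (d : measure_display) (T : measurableType d)
  (mu : {measure set T -> \bar R}).
Local Notation Re := (@complex.Re R).
Local Notation Im := (@complex.Im R).
Local Notation Rint f := (Rintegral mu setT f).
Local Notation rintegrable f := (mu.-integrable setT (EFin \o f)).
Implicit Types (a b : T -> R[i]) (f g : T -> R).

Lemma cintegrableD a b : cintegrable mu a -> cintegrable mu b ->
  cintegrable mu (fun w => a w + b w).
Proof.
move=> [aRe aIm] [bRe bIm]; split.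
  apply: (eq_integrable measurableT _ _ _ (integrableD measurableT aRe bRe)).
  by move=> w _; rewrite /= cReD.
apply: (eq_integrable measurableT _ _ _ (integrableD measurableT aIm bIm)).
by move=> w _; rewrite /= cImD.
Qed.

Lemma cintegrableB a b : cintegrable mu a -> cintegrable mu b ->
  cintegrable mu (fun w => a w - b w).
Proof.
move=> [aRe aIm] [bRe bIm]; split.
  apply: (eq_integrable measurableT _ _ _ (integrableB measurableT aRe bRe)).
  by move=> w _; rewrite /= cReB.
apply: (eq_integrable measurableT _ _ _ (integrableB measurableT aIm bIm)).
by move=> w _; rewrite /= cImB.
Qed.

Lemma cintegralD a b : cintegrable mu a -> cintegrable mu b ->
  cintegral mu (fun w => a w + b w) = cintegral mu a + cintegral mu b.
Proof.
move=> [aRe aIm] [bRe bIm]; apply: complex_ext; rewrite /cintegral /=.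
  by under eq_Rintegral do rewrite cReD; exact: RintegralD.
by under eq_Rintegral do rewrite cImD; exact: RintegralD.
Qed.

Lemma cintegralB a b : cintegrable mu a -> cintegrable mu b ->
  cintegral mu (fun w => a w - b w) = cintegral mu a - cintegral mu b.
Proof.
move=> [aRe aIm] [bRe bIm]; apply: complex_ext; rewrite /cintegral /=.
  by under eq_Rintegral do rewrite cReB; exact: RintegralB.
by under eq_Rintegral do rewrite cImB; exact: RintegralB.
Qed.

Lemma integrable_sub_div4 f g : rintegrable f -> rintegrable g ->
  rintegrable (fun w => (f w - g w) / 4).
Proof.
move=> fi gi.
have int_sub := integrableB measurableT fi gi.
exact: (eq_integrable measurableT _ _ _ (integrableZr measurableT 4^-1 int_sub)).
Qed.

Lemma Rintegral_sub_div4 f g : rintegrable f -> rintegrable g ->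
  Rint (fun w => (f w - g w) / 4) = (Rint f - Rint g) / 4.
Proof.
move=> fi gi; rewrite RintegralZr //; first by rewrite RintegralB.
exact: (eq_integrable measurableT _ _ _ (integrableB measurableT fi gi)).
Qed.

Lemma cintegral_mulJ u v : sqintegrable mu u -> sqintegrable mu v ->
  cintegrable mu (fun w => u w * (v w)^*%C) /\
  cintegral mu (fun w => u w * (v w)^*%C) =
  Complex ((Rint (fun w => cabs2 (u w + v w)) - Rint (fun w => cabs2 (u w - v w))) / 4)
          ((Rint (fun w => cabs2 (u w + 'i%C * v w)) -
            Rint (fun w => cabs2 (u w - 'i%C * v w))) / 4).
Proof.
move=> u2 v2; have iv2 := sqintegrableMl 'i%C v2.
under eq_fun do rewrite cpolarization.
have [intD intB] := (sqintegrable_cabs2 (sqintegrableD u2 v2),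
                     sqintegrable_cabs2 (sqintegrableB u2 v2)).
have [intDi intBi] := (sqintegrable_cabs2 (sqintegrableD u2 iv2),
                       sqintegrable_cabs2 (sqintegrableB u2 iv2)).
split; first by split; exact: integrable_sub_div4.
by rewrite /cintegral /= !Rintegral_sub_div4.
Qed.

End ComplexIntegral.

Section Adjoint.
Variables (R : realType) (V : lmodType R[i]) (inner : V -> V -> R[i]).
Hypothesis ip : inner_product inner.
Local Notation hnorm2 := (hnorm2 inner).

Lemma adjoint_clinear A Aadj : is_adjoint inner A Aadj -> clinear Aadj.
Proof.
move=> adjA a x y; apply: (inner_inj ip) => z.
by rewrite (innerDr ip) (innerZr ip) -!adjA (innerDr ip) (innerZr ip).
Qed.

Lemma adjoint_unique A B B' : is_adjoint inner A B -> is_adjoint inner A B' -> B =1 B'.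
Proof. by move=> AB AB' y; apply: (inner_inj ip) => x; rewrite -AB AB'. Qed.

Lemma adjoint_comp A B Aadj Badj : is_adjoint inner A Aadj -> is_adjoint inner B Badj ->
  is_adjoint inner (A \o B) (Badj \o Aadj).
Proof. by move=> adjA adjB x y; rewrite /= adjA adjB. Qed.

Lemma bounded_linear_adjoint A : hcomplete inner -> bounded_linear inner A ->
  exists Aadj, is_adjoint inner A Aadj.
Proof.
move=> hc bA; have [c [c0 Ac]] := bounded_linear_hnorm2 ip bA.
suff /choice[Aadj AadjP] : forall y, exists g, forall x, inner (A x) y = inner x g.
  by exists Aadj.
move=> y; have y0 := hnorm2_ge0 ip y.
have lin : clinear (fun x => inner (A x) y : R[i]^o).
  by move=> a x x'; rewrite (proj1 bA) (innerDl ip) (innerZl ip).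
have C_gt0 : 0 < c * hnorm2 y + 1 by nra.
apply: (riesz_representation ip hc lin C_gt0) => x.
apply: le_trans (cauchy_schwarz ip _ _) _.
have := Ac x; have := hnorm2_ge0 ip x; have := hnorm2_ge0 ip (A x).
by move: (hnorm2 (A x)) (hnorm2 x) => a b; nra.
Qed.

End Adjoint.

Section ParsevalFrame.
Variables (R : realType) (V : lmodType R[i]) (inner : V -> V -> R[i]).
Variables (d : measure_display) (T : measurableType d) (mu : {measure set T -> \bar R}).
Variables (Kadj : V -> V) (F : T -> V).
Hypotheses (ip : inner_product inner) (Kadj_lin : clinear Kadj)
  (pf : parseval_cont_Kframe inner mu Kadj F).
Local Notation hnorm2 := (hnorm2 inner).

Lemma parseval_sqint g : sqint mu (fun w => inner g (F w)) = (hnorm2 (Kadj g))%:E.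
Proof. by case: pf => _ ->; rewrite (hnorm_sqr ip). Qed.

Lemma parseval_sqintegrable g : sqintegrable mu (fun w => inner g (F w)).
Proof. by split; [exact: pf.1 | rewrite parseval_sqint ltry]. Qed.

Lemma parseval_gram g h :
  cintegrable mu (fun w => inner g (F w) * inner (F w) h) /\
  cintegral mu (fun w => inner g (F w) * inner (F w) h) = inner (Kadj g) (Kadj h).
Proof.
have -> : (fun w => inner g (F w) * inner (F w) h) =
          (fun w => inner g (F w) * (inner h (F w))^*%C).
  by apply/funext => w; rewrite -(inner_conj ip).
have [gram_int ->] := cintegral_mulJ (parseval_sqintegrable g) (parseval_sqintegrable h).
split=> //; rewrite (inner_polarization ip) -!(clinearZ Kadj_lin).
rewrite -!(clinearB Kadj_lin) -!(clinearD Kadj_lin).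
have Rint_frame x : hnorm2 (Kadj x) = Rintegral mu setT (fun w => cabs2 (inner x (F w))).
  by apply/EFin_inj; rewrite Rintegral_cabs2 ?parseval_sqint //; apply: parseval_sqintegrable.
rewrite !Rint_frame; congr (Complex ((_ - _) / 4) ((_ - _) / 4));
  by apply: eq_Rintegral => w _; rewrite ?(innerBl ip) ?(innerDl ip) ?(innerZl ip).
Qed.

End ParsevalFrame.

Section AnalysisOperators.
Variables (R : realType) (V : lmodType R[i]) (inner : V -> V -> R[i]).
Variables (d : measure_display) (T : measurableType d) (mu : {measure set T -> \bar R}).
Hypothesis ip : inner_product inner.
Implicit Types (phi psi : V -> T -> R[i]) (a b : T -> R[i]) (F G : T -> V).

Lemma bounded_to_L2D phi psi : bounded_to_L2 inner mu phi -> bounded_to_L2 inner mu psi ->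
  bounded_to_L2 inner mu (fun f w => phi f w + psi f w).
Proof.
move=> [phi2 phi_lin [c phi_bd]] [psi2 psi_lin [c' psi_bd]]; split.
- by move=> f; exact: sqintegrableD (phi2 f) (psi2 f).
- by move=> a f g w; rewrite phi_lin psi_lin; ring.
exists (2 * c + 2 * c') => f /=.
have [[phi_m _] [psi_m _]] := (phi2 f, psi2 f).
have sum_le := sqint_le_sum2 mu phi_m psi_m (cmeasurableD phi_m psi_m) (fun w => cabs2D_le _ _).
apply: le_trans sum_le _.
have two_ge0 : (0 <= 2%:E :> \bar R)%E by rewrite lee_fin.
apply: le_trans (leeD (lee_wpmul2l two_ge0 (phi_bd f)) (lee_wpmul2l two_ge0 (psi_bd f))) _.
by rewrite -!EFinM -EFinD lee_fin; nra.
Qed.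

Lemma bounded_to_L2N phi : bounded_to_L2 inner mu phi ->
  bounded_to_L2 inner mu (fun f w => - phi f w).
Proof.
move=> [phi2 phi_lin [c phi_bd]]; split.
- move=> f; have [phi_m phi_fin] := phi2 f; split; first exact: cmeasurableN.
  by rewrite /sqint; under eq_integral do rewrite cabs2N.
- by move=> a f g w; rewrite phi_lin; ring.
by exists c => f; rewrite /sqint; under eq_integral do rewrite cabs2N; exact: phi_bd.
Qed.

Lemma bounded_to_L2_bessel G : cont_bessel inner mu G ->
  bounded_to_L2 inner mu (fun f w => inner f (G w)).
Proof.
move=> [wmG [B [_ GB]]]; split.
- by move=> f; split; [exact: wmG | exact: le_lt_trans (GB f) (ltry _)].
- by move=> a f g w; rewrite (innerDl ip) (innerZl ip).
by exists B.
Qed.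

Lemma bessel_of_bounded_to_L2 G : weakly_measurable inner G ->
  bounded_to_L2 inner mu (fun f w => inner f (G w)) -> cont_bessel inner mu G.
Proof.
move=> wmG [_ _ [c Gc]]; split=> //; exists (`|c| + 1); split=> [|f].
  by rewrite ltr_pwDr ?normr_ge0.
apply: le_trans (Gc f) _; rewrite lee_fin ler_wpM2r ?exprn_ge0 ?(hnorm_ge0 inner) //.
by have := ler_norm c; lra.
Qed.

Lemma weak_integral_isD a b F u v :
  weak_integral_is inner mu a F u -> weak_integral_is inner mu b F v ->
  weak_integral_is inner mu (fun w => a w + b w) F (u + v).
Proof.
move=> au bv h /=; have [a_int au_h] := au h; have [b_int bv_h] := bv h.
have -> : (fun w => (a w + b w) * inner (F w) h) =
          (fun w => a w * inner (F w) h + b w * inner (F w) h).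
  by apply/funext => w; rewrite mulrDl.
by split; [exact: cintegrableD | rewrite (innerDl ip) cintegralD // au_h bv_h].
Qed.

Lemma weak_integral_isB a b F u v :
  weak_integral_is inner mu a F u -> weak_integral_is inner mu b F v ->
  weak_integral_is inner mu (fun w => a w - b w) F (u - v).
Proof.
move=> au bv h /=; have [a_int au_h] := au h; have [b_int bv_h] := bv h.
have -> : (fun w => (a w - b w) * inner (F w) h) =
          (fun w => a w * inner (F w) h - b w * inner (F w) h).
  by apply/funext => w; rewrite mulrBl.
by split; [exact: cintegrableB | rewrite (innerBl ip) cintegralB // au_h bv_h].
Qed.

End AnalysisOperators.

Section CanonicalDual.
Variables (R : realType) (V : lmodType R[i]) (inner : V -> V -> R[i]).
Variables (d : measure_display) (T : measurableType d) (mu : {measure set T -> \bar R}).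
Variables (K Kadj Kdag : V -> V) (F : T -> V).
Hypotheses (ip : inner_product inner) (hc : hcomplete inner) (bK : bounded_linear inner K)
  (adjK : is_adjoint inner K Kadj) (mp : is_MP_inverse inner K Kdag)
  (pf : parseval_cont_Kframe inner mu Kadj F).
Local Notation hnorm2 := (hnorm2 inner).

Lemma canonical_dual : dual_cont_K_bessel inner mu K F (fun w => Kdag (F w)).
Proof.
have [bKdag KKdagK _ _ KdagK_sa] := mp.
have [D adjKdag] := bounded_linear_adjoint ip hc bKdag.
have KadjD f : Kadj (D f) = Kdag (K f) := adjoint_unique ip (adjoint_comp adjKdag adjK) KdagK_sa f.
have KdagF f : (fun w => inner f (Kdag (F w))) = (fun w => inner (D f) (F w)).
  by apply/funext => w; rewrite (inner_conj ip (F w) (D f)) -adjKdag -(inner_conj ip).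
have Kadj_lin := adjoint_clinear ip adjK.
have [cd [cd0 Kdag_bd]] := bounded_linear_hnorm2 ip bKdag.
have [ck [ck0 K_bd]] := bounded_linear_hnorm2 ip bK.
split.
  split=> [f|]; first by rewrite KdagF; exact: pf.1.
  exists (cd * ck + 1); split=> [|f]; first by rewrite ltr_pwDr ?mulr_ge0.
  rewrite KdagF (parseval_sqint ip pf) KadjD lee_fin (hnorm_sqr ip).
  apply: le_trans (Kdag_bd _) _; have := K_bd f; have := hnorm2_ge0 ip f.
  by move: (hnorm2 (K f)) (hnorm2 f) => a b; nra.
move=> f; rewrite KdagF => h /=; have [gram_int ->] := parseval_gram ip Kadj_lin pf (D f) h.
by split=> //; rewrite KadjD -adjK KKdagK.
Qed.

End CanonicalDual.

Theorem lemma3p3 (R : realType) (V : lmodType R[i]) (inner : V -> V -> R[i])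
  (d : measure_display) (T : measurableType d) (mu : {measure set T -> \bar R})
  (K Kadj Kdag : V -> V) (F G : T -> V) :
  separable_hilbert_space inner ->
  bounded_linear inner K ->
  closed_range inner K ->
  is_adjoint inner K Kadj ->
  is_MP_inverse inner K Kdag ->
  parseval_cont_Kframe inner mu Kadj F ->
  weakly_measurable inner G ->
  (dual_cont_K_bessel inner mu K F G <->
   exists phi : V -> T -> R[i],
     [/\ bounded_to_L2 inner mu phi,
         (forall f : V, weak_integral_is inner mu (phi f) F 0) &
         (forall (f : V) (w : T), phi f w = inner f (G w - Kdag (F w)))]).
Proof.
move=> [ip hc _] bK _ adjK mp pf wmG.
have [bessel_KdagF dual_KdagF] := canonical_dual ip hc bK adjK mp pf.
have L2_KdagF := bounded_to_L2_bessel ip bessel_KdagF.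
split=> [[besselG dualG]|[phi [L2_phi T_phi phiE]]].
  exists (fun f w => inner f (G w) - inner f (Kdag (F w))); split.
  - exact: bounded_to_L2D (bounded_to_L2_bessel ip besselG) (bounded_to_L2N L2_KdagF).
  - by move=> f; rewrite -(subrr (K f)); exact: weak_integral_isB.
  - by move=> f w; rewrite (innerBr ip).
have G_split f : (fun w => inner f (G w)) = (fun w => phi f w + inner f (Kdag (F w))).
  by apply/funext => w; rewrite phiE (innerBr ip) subrK.
split.
  apply: bessel_of_bounded_to_L2 => //; rewrite (funext G_split).
  exact: bounded_to_L2D L2_phi L2_KdagF.
by move=> f; rewrite G_split -[K f]add0r; exact: weak_integral_isD.
Qed.
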